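(* Let $d_0,d_1>0$ with $d_0+d_1=1$, and let $C_\alpha>0$, $C_\beta>0$. With $f_{j+i}=f(x_{j+i})$ on a uniform grid $x_{j+i}=x_j+i\Delta x$, define $\beta_0^*,\beta_1^*$ and $\tau_4$ by $$\beta_0^*=\tfrac14(3f_j-4f_{j-1}+f_{j-2})^2+C_\beta(f_{j-2}-2f_{j-1}+f_j)^2,\quad \beta_1^*=\tfrac14(3f_j-4f_{j+1}+f_{j+2})^2+C_\beta(f_j-2f_{j+1}+f_{j+2})^2,$$ $$\tau_4=\bigl|(f_{j+2}-3f_{j+1}+3f_j-f_{j-1})(2f_{j+1}-3f_j+f_{j-1})\bigr|,$$ and the nonlinear weights (with exponent $p=1$ and $\varepsilon=0$) $$\alpha_k=d_k\bigl(1+C_\alpha\,\tau_4/\beta_k^*\bigr),\qquad \omega_k=\frac{\alpha_k}{\alpha_0+\alpha_1},\quad k=0,1.$$ Assume $f$ is $C^6$ near the relevant points. Then $\omega_k-d_k=O(\Delta x^2)$ as $\Delta x\to0^+$ in each of the following situations: (1) $x_j=x^*$ is fixed and $f'(x^* )\ne0$; (2) $f'(x_c)=0$, $f''(x_c)\ne0$, $f'''(x_c)\ne0$ and, for a fixed $\lambda\in(-1,1)$, the grid is placed so that $x_c=x_j+\lambda\Delta x$.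
   Context: This is the weight construction of the WENO3-Z$_{ES4}$ scheme (which uses $C_\beta=2.0$, $C_\alpha=1.3$, $p=1$); $d_k$ are the linear weights of the third-order WENO reconstruction, $\beta_k^*$ the local smoothness indicators, $\tau_4$ the global smoothness indicator. The condition $\omega_k-d_k=O(\Delta x^2)$ is the standard sufficient condition for third-order accuracy of the WENO3 reconstruction. A point $x_c$ with $f'(x_c)=0$, $f''(x_c)\ne0$, $f'''(x_c)\ne0$ is a first-order critical point ($CP_1$). *)

From Stdlib Require Import Reals.
From Coquelicot Require Import Coquelicot.
Open Scope R_scope.

Definition fv (f : R -> R) (xj dx : R) (i : Z) : R := f (xj + IZR i * dx).

Definition beta0s (Cb : R) (f : R -> R) (xj dx : R) : R :=
  let fm2 := fv f xj dx (-2) in let fm1 := fv f xj dx (-1) in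
  let f0 := fv f xj dx 0 in
  / 4 * (3 * f0 - 4 * fm1 + fm2) ^ 2 + Cb * (fm2 - 2 * fm1 + f0) ^ 2.

Definition beta1s (Cb : R) (f : R -> R) (xj dx : R) : R :=
  let f0 := fv f xj dx 0 in let fp1 := fv f xj dx 1 in
  let fp2 := fv f xj dx 2 in
  / 4 * (3 * f0 - 4 * fp1 + fp2) ^ 2 + Cb * (f0 - 2 * fp1 + fp2) ^ 2.

Definition tau4 (f : R -> R) (xj dx : R) : R :=
  let fm1 := fv f xj dx (-1) in let f0 := fv f xj dx 0 in
  let fp1 := fv f xj dx 1 in let fp2 := fv f xj dx 2 in
  Rabs ((fp2 - 3 * fp1 + 3 * f0 - fm1) * (2 * fp1 - 3 * f0 + fm1)).

Definition alpha0 (d0 Ca Cb : R) (f : R -> R) (xj dx : R) : R :=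
  d0 * (1 + Ca * (tau4 f xj dx / beta0s Cb f xj dx)).
Definition alpha1 (d1 Ca Cb : R) (f : R -> R) (xj dx : R) : R :=
  d1 * (1 + Ca * (tau4 f xj dx / beta1s Cb f xj dx)).

Definition omega0 (d0 d1 Ca Cb : R) (f : R -> R) (xj dx : R) : R :=
  alpha0 d0 Ca Cb f xj dx / (alpha0 d0 Ca Cb f xj dx + alpha1 d1 Ca Cb f xj dx).
Definition omega1 (d0 d1 Ca Cb : R) (f : R -> R) (xj dx : R) : R :=
  alpha1 d1 Ca Cb f xj dx / (alpha0 d0 Ca Cb f xj dx + alpha1 d1 Ca Cb f xj dx).

Definition C6_near (f : R -> R) (a : R) : Prop :=
  exists r : R, 0 < r /\
    forall x : R, Rabs (x - a) < r ->
      (forall k : nat, (k <= 6)%nat -> ex_derive_n f k x) /\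
      continuous (Derive_n f 6) x.

Definition bigO_sq_right (g : R -> R) : Prop :=
  exists M delta : R, 0 < delta /\
    forall dx : R, 0 < dx < delta -> Rabs (g dx) <= M * dx ^ 2.

(* Taylor expansion around the reference point turns each finite difference in
   beta_0, beta_1 and tau_4 into a polynomial in dx with an explicit remainder.
   Where f' <> 0, tau_4 = O(dx^4) while both beta_k >= c dx^2 (their first terms are
   about (2 dx f')^2), so each tau_4 / beta_k is O(dx^2).  At a first-order critical
   point, tau_4 = O(dx^5), both beta_k >= c dx^4 through the curvature terms
   C_beta (dx^2 f'')^2, and beta_1 - beta_0 = O(dx^5), so
   tau_4/beta_0 - tau_4/beta_1 = tau_4 (beta_1 - beta_0) / (beta_0 beta_1) = O(dx^2).
   Finally, for p = 1 and d_0 + d_1 = 1,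
   omega_0 - d_0 = d_0 d_1 C_alpha (tau_4/beta_0 - tau_4/beta_1) / (alpha_0 + alpha_1)
   with alpha_0 + alpha_1 >= 1, and omega_1 - d_1 is its opposite. *)

From Stdlib Require Import Reals Lra Lia.
From Coquelicot Require Import Coquelicot.
Open Scope R_scope.

(** * Taylor expansion *)

Definition taylor_poly (f : R -> R) (a : R) (n : nat) (s : R) : R :=
  sum_f_R0 (fun k => s ^ k / INR (Factorial.fact k) * Derive_n f k a) n.

Lemma taylor_poly_at_0 (f : R -> R) (a : R) (n : nat) : taylor_poly f a n 0 = f a.
Proof.
induction n as [|n IH]; unfold taylor_poly in *; cbn [sum_f_R0].
- simpl; field.
- rewrite IH, pow_i by lia; unfold Rdiv; ring.
Qed.

Lemma taylor_poly_comp_opp (f : R -> R) (a s : R) (n : nat) :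
  locally a (fun y => forall k, (k <= n)%nat -> ex_derive_n f k y) ->
  taylor_poly (fun y => f (- y)) (- a) n (- s) = taylor_poly f a n s.
Proof.
intros Hloc; apply sum_eq; intros i Hi.
rewrite Derive_n_comp_opp, Ropp_involutive.
2: { rewrite Ropp_involutive; eapply filter_imp; [| exact Hloc]; intros y Hy k Hk; apply Hy; lia. }
replace (- s) with ((-1) * s) by ring.
rewrite Rpow_mult_distr.
transitivity (((-1) * (-1)) ^ i * (s ^ i / INR (Factorial.fact i) * Derive_n f i a)).
- rewrite Rpow_mult_distr; unfold Rdiv; ring.
- replace ((-1) * (-1)) with 1 by ring; rewrite pow1; ring.
Qed.

Lemma taylor_lagrange_le (f : R -> R) (a s B : R) (n : nat) :
  0 < s ->
  (forall t, a <= t <= a + s -> forall k, (k <= S n)%nat -> ex_derive_n f k t) ->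
  (forall t, a < t < a + s -> Rabs (Derive_n f (S n) t) <= B) ->
  Rabs (f (a + s) - taylor_poly f a n s) <= B * s ^ S n.
Proof.
intros Hs Hder HB.
destruct (Taylor_Lagrange f n a (a + s)) as [z [Hz ->]]; [lra | exact Hder |].
replace (a + s - a) with s by ring; fold (taylor_poly f a n s).
assert (Hfact : 1 <= INR (Factorial.fact (S n))) by (apply (le_INR 1), Factorial.lt_O_fact).
assert (Hsn : 0 < s ^ S n) by (apply pow_lt; lra).
replace (_ + _ - _) with (s ^ S n * (Derive_n f (S n) z / INR (Factorial.fact (S n))))
  by (unfold Rdiv; ring).
rewrite Rabs_mult, (Rabs_pos_eq (s ^ S n)), Rmult_comm by lra.
apply Rmult_le_compat_r; [lra |].
unfold Rdiv; rewrite Rabs_mult, Rabs_inv, (Rabs_pos_eq (INR _)) by lra.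
assert (Hinv : / INR (Factorial.fact (S n)) <= 1)
  by (rewrite <- Rinv_1; apply Rinv_le_contravar; lra).
pose proof (HB z Hz); pose proof (Rabs_pos (Derive_n f (S n) z)).
assert (0 < / INR (Factorial.fact (S n))) by (apply Rinv_0_lt_compat; lra).
nra.
Qed.

Lemma locally_in_ball (a r x : R) :
  Rabs (x - a) < r -> locally x (fun y => Rabs (y - a) < r).
Proof.
intros Hx.
assert (He : 0 < r - Rabs (x - a)) by lra.
exists (mkposreal _ He); intros y Hy; change (Rabs (y - x) < r - Rabs (x - a)) in Hy.
replace (y - a) with ((y - x) + (x - a)) by ring; pose proof (Rabs_triang (y - x) (x - a)); lra.
Qed.

(* Taylor_Lagrange only expands to the right; left expansions go through [y |-> f (- y)]. *)
Lemma taylor_remainder_le_on_ball (f : R -> R) (a r B : R) (n : nat) :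
  (forall x, Rabs (x - a) < r ->
     (forall k, (k <= S n)%nat -> ex_derive_n f k x) /\ Rabs (Derive_n f (S n) x) <= B) ->
  forall s, Rabs s < r -> Rabs (f (a + s) - taylor_poly f a n s) <= B * Rabs s ^ S n.
Proof.
intros Hball s Hs.
assert (Hder : forall x, Rabs (x - a) < r ->
                locally x (fun y => forall k, (k <= S n)%nat -> ex_derive_n f k y))
  by (intros x Hx; eapply filter_imp; [| exact (locally_in_ball a r x Hx)];
      intros y Hy; apply Hball, Hy).
destruct (Rtotal_order s 0) as [Hneg | [-> | Hpos]].
- rewrite (Rabs_left s) in Hs |- * by lra.
  set (g := fun y => f (- y)).
  replace (f (a + s)) with (g (- a + - s)) by (unfold g; f_equal; ring).
  rewrite <- (taylor_poly_comp_opp f a s n)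
    by (eapply filter_imp; [| apply Hder; rewrite Rminus_diag, Rabs_R0; lra];
        intros y Hy k Hk; apply Hy; lia).
  apply taylor_lagrange_le; [lra | |].
  + intros t Ht k Hk; apply ex_derive_n_comp_opp.
    eapply filter_imp; [| apply Hder, Rabs_def1; lra]; intros y Hy j Hj; apply Hy; lia.
  + intros t Ht; unfold g; rewrite Derive_n_comp_opp.
    * rewrite Rabs_mult, <- RPow_abs, Rabs_m1, pow1, Rmult_1_l.
      apply Hball, Rabs_def1; lra.
    * apply Hder, Rabs_def1; lra.
- rewrite Rplus_0_r, taylor_poly_at_0, Rminus_diag, Rabs_R0, pow_i by lia; lra.
- rewrite (Rabs_right s) in Hs |- * by lra.
  apply taylor_lagrange_le; [lra | |].
  + intros t Ht; apply Hball, Rabs_def1; lra.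
  + intros t Ht; apply Hball, Rabs_def1; lra.
Qed.

Lemma continuous_locally_bounded (g : R -> R) (a : R) :
  continuous g a -> locally a (fun t => Rabs (g t) <= Rabs (g a) + 1).
Proof.
intros Hc.
apply (filter_imp (fun t => Rabs (g t - g a) < 1)).
- intros t Ht; pose proof (Rabs_triang_inv (g t) (g a)); lra.
- apply (Hc (fun y => Rabs (y - g a) < 1)); exists (mkposreal 1 Rlt_0_1); easy.
Qed.

(* The order-(n+2) derivative makes f^(n+1) continuous, hence bounded near [a]. *)
Lemma C6_near_taylor_remainder (f : R -> R) (a : R) (n : nat) :
  C6_near f a -> (n <= 4)%nat ->
  exists K, 0 <= K /\
    locally 0 (fun s => Rabs (f (a + s) - taylor_poly f a n s) <= K * Rabs s ^ S n).
Proof.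
intros [r [Hr HC6]] Hn.
assert (Hcont : continuous (Derive_n f (S n)) a).
{ apply (@ex_derive_continuous R_AbsRing R_NormedModule).
  apply (proj1 (HC6 a ltac:(rewrite Rminus_diag, Rabs_R0; lra)) (S (S n))); lia. }
destruct (continuous_locally_bounded _ _ Hcont) as [e Hbound].
exists (Rabs (Derive_n f (S n) a) + 1); split; [pose proof (Rabs_pos (Derive_n f (S n) a)); lra |].
assert (Hpos : 0 < Rmin r e) by (apply Rmin_pos; [lra | apply cond_pos]).
exists (mkposreal _ Hpos); intros s Hs; change (Rabs (s - 0) < Rmin r e) in Hs.
rewrite Rminus_0_r in Hs.
apply (taylor_remainder_le_on_ball f a (Rmin r e)); [| exact Hs].
intros x Hx; split.
- intros k Hk; apply HC6; [pose proof (Rmin_l r e); lra | lia].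
- apply Hbound; change (Rabs (x - a) < e); pose proof (Rmin_r r e); lra.
Qed.

(** * Finite-difference stencils *)

Lemma at_right_0_intro (P : R -> Prop) (e : R) :
  0 < e -> (forall h, 0 < h < e -> P h) -> at_right 0 P.
Proof.
intros He HP; exists (mkposreal e He); intros h Hh hpos; apply HP; split; [exact hpos |].
change (Rabs (h - 0) < e) in Hh; rewrite Rminus_0_r, Rabs_pos_eq in Hh; lra.
Qed.

Lemma Rabs_lincomb5_le (w1 w2 w3 w4 w5 e1 e2 e3 e4 e5 E : R) :
  Rabs e1 <= E -> Rabs e2 <= E -> Rabs e3 <= E -> Rabs e4 <= E -> Rabs e5 <= E ->
  Rabs (w1 * e1 + w2 * e2 + w3 * e3 + w4 * e4 + w5 * e5)
    <= (Rabs w1 + Rabs w2 + Rabs w3 + Rabs w4 + Rabs w5) * E.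
Proof.
intros H1 H2 H3 H4 H5.
assert (Hterm : forall w e, Rabs e <= E -> Rabs (w * e) <= Rabs w * E)
  by (intros w e He; rewrite Rabs_mult; apply Rmult_le_compat_l; [apply Rabs_pos | exact He]).
pose proof (Hterm w1 e1 H1); pose proof (Hterm w2 e2 H2); pose proof (Hterm w3 e3 H3);
pose proof (Hterm w4 e4 H4); pose proof (Hterm w5 e5 H5).
pose proof (Rabs_triang (w1 * e1) (w2 * e2)).
pose proof (Rabs_triang (w1 * e1 + w2 * e2) (w3 * e3)).
pose proof (Rabs_triang (w1 * e1 + w2 * e2 + w3 * e3) (w4 * e4)).
pose proof (Rabs_triang (w1 * e1 + w2 * e2 + w3 * e3 + w4 * e4) (w5 * e5)).
lra.
Qed.

(* The combination, its Taylor counterpart and the weight bound are passed as equations,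
   so that callers can state them in closed form and discharge them by [ring]/[field]. *)
Definition stencil_error_le (f : R -> R) (a mu h K : R) (n : nat) : Prop :=
  forall xj wm2 wm1 w0 w1 w2 X p W,
    xj = a + mu * h ->
    X = wm2 * fv f xj h (-2) + wm1 * fv f xj h (-1) + w0 * fv f xj h 0
        + w1 * fv f xj h 1 + w2 * fv f xj h 2 ->
    wm2 * taylor_poly f a n ((mu + -2) * h) + wm1 * taylor_poly f a n ((mu + -1) * h)
      + w0 * taylor_poly f a n ((mu + 0) * h) + w1 * taylor_poly f a n ((mu + 1) * h)
      + w2 * taylor_poly f a n ((mu + 2) * h) = p ->
    Rabs wm2 + Rabs wm1 + Rabs w0 + Rabs w1 + Rabs w2 <= W ->
    Rabs (X - p) <= W * (K * (3 * h) ^ S n).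

Section Stencil.

Variables (f : R -> R) (a K mu : R) (n : nat).
Hypotheses (HK : 0 <= K) (Hmu : Rabs mu <= 1).
Hypothesis Htaylor :
  locally 0 (fun s => Rabs (f (a + s) - taylor_poly f a n s) <= K * Rabs s ^ S n).

Lemma grid_taylor_error :
  at_right 0 (fun h => forall c, Rabs c <= 2 ->
    Rabs (f (a + mu * h + c * h) - taylor_poly f a n ((mu + c) * h)) <= K * (3 * h) ^ S n).
Proof.
destruct Htaylor as [e He].
apply (at_right_0_intro _ (e / 3)); [pose proof (cond_pos e); lra |].
intros h Hh c Hc.
assert (Hs : Rabs ((mu + c) * h) <= 3 * h).
{ rewrite Rabs_mult, (Rabs_pos_eq h) by lra.
  pose proof (Rabs_triang mu c); apply Rmult_le_compat_r; lra. }
replace (a + mu * h + c * h) with (a + (mu + c) * h) by ring.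
eapply Rle_trans.
- apply He; change (Rabs ((mu + c) * h - 0) < e); rewrite Rminus_0_r; lra.
- apply Rmult_le_compat_l; [exact HK |]; apply pow_incr; split; [apply Rabs_pos | exact Hs].
Qed.

Lemma stencil_taylor_error : at_right 0 (fun h => stencil_error_le f a mu h K n).
Proof.
eapply filter_imp; [| exact grid_taylor_error].
intros h Herr xj wm2 wm1 w0 w1 w2 X p W -> -> <- HW.
unfold fv.
set (err := fun c => f (a + mu * h + c * h) - taylor_poly f a n ((mu + c) * h)).
replace (_ - _) with (wm2 * err (-2) + wm1 * err (-1) + w0 * err 0 + w1 * err 1 + w2 * err 2)
  by (unfold err; ring).
assert (HE : 0 <= K * (3 * h) ^ S n)
  by (apply Rle_trans with (Rabs (err 0)); [apply Rabs_pos | apply Herr; rewrite Rabs_R0; lra]).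
eapply Rle_trans; [apply Rabs_lincomb5_le; apply Herr | apply Rmult_le_compat_r; assumption];
  unfold Rabs; destruct (Rcase_abs _); lra.
Qed.

End Stencil.

(** * Smoothness indicators *)

Lemma sqr_ge_of_close (x p : R) : Rabs (x - p) <= Rabs p / 2 -> p ^ 2 / 4 <= x ^ 2.
Proof.
intros Hclose.
pose proof (Rabs_triang_inv p (p - x)) as Hrev; replace (p - (p - x)) with x in Hrev by ring.
rewrite <- Rabs_Ropp in Hclose; replace (- (x - p)) with (p - x) in Hclose by ring.
rewrite <- (pow2_abs x), <- (pow2_abs p); pose proof (Rabs_pos p); nra.
Qed.

Lemma tau4_le (f : R -> R) (xj h e3 e2 : R) :
  Rabs (fv f xj h 2 - 3 * fv f xj h 1 + 3 * fv f xj h 0 - fv f xj h (-1)) <= e3 ->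
  Rabs (2 * fv f xj h 1 - 3 * fv f xj h 0 + fv f xj h (-1)) <= e2 ->
  tau4 f xj h <= e3 * e2.
Proof.
intros H3 H2; unfold tau4; rewrite Rabs_mult.
apply Rmult_le_compat; [apply Rabs_pos | apply Rabs_pos | exact H3 | exact H2].
Qed.

Lemma beta0s_ge_of_slope (Cb : R) (f : R -> R) (xj h p : R) : 0 <= Cb ->
  Rabs ((3 * fv f xj h 0 - 4 * fv f xj h (-1) + fv f xj h (-2)) - p) <= Rabs p / 2 ->
  p ^ 2 / 16 <= beta0s Cb f xj h.
Proof.
intros HCb Hclose; apply sqr_ge_of_close in Hclose; unfold beta0s; cbv zeta.
pose proof (pow2_ge_0 (fv f xj h (-2) - 2 * fv f xj h (-1) + fv f xj h 0)); nra.
Qed.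

Lemma beta1s_ge_of_slope (Cb : R) (f : R -> R) (xj h p : R) : 0 <= Cb ->
  Rabs ((3 * fv f xj h 0 - 4 * fv f xj h 1 + fv f xj h 2) - p) <= Rabs p / 2 ->
  p ^ 2 / 16 <= beta1s Cb f xj h.
Proof.
intros HCb Hclose; apply sqr_ge_of_close in Hclose; unfold beta1s; cbv zeta.
pose proof (pow2_ge_0 (fv f xj h 0 - 2 * fv f xj h 1 + fv f xj h 2)); nra.
Qed.

Lemma beta0s_ge_of_curvature (Cb : R) (f : R -> R) (xj h q : R) : 0 <= Cb ->
  Rabs ((fv f xj h (-2) - 2 * fv f xj h (-1) + fv f xj h 0) - q) <= Rabs q / 2 ->
  Cb * (q ^ 2 / 4) <= beta0s Cb f xj h.
Proof.
intros HCb Hclose; apply sqr_ge_of_close in Hclose; unfold beta0s; cbv zeta.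
pose proof (pow2_ge_0 (3 * fv f xj h 0 - 4 * fv f xj h (-1) + fv f xj h (-2))); nra.
Qed.

Lemma beta1s_ge_of_curvature (Cb : R) (f : R -> R) (xj h q : R) : 0 <= Cb ->
  Rabs ((fv f xj h 0 - 2 * fv f xj h 1 + fv f xj h 2) - q) <= Rabs q / 2 ->
  Cb * (q ^ 2 / 4) <= beta1s Cb f xj h.
Proof.
intros HCb Hclose; apply sqr_ge_of_close in Hclose; unfold beta1s; cbv zeta.
pose proof (pow2_ge_0 (3 * fv f xj h 0 - 4 * fv f xj h 1 + fv f xj h 2)); nra.
Qed.

Lemma beta1s_sub_beta0s_le (Cb : R) (f : R -> R) (xj h a a' b b' : R) : 0 <= Cb ->
  let A0 := 3 * fv f xj h 0 - 4 * fv f xj h (-1) + fv f xj h (-2) in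
  let A1 := 3 * fv f xj h 0 - 4 * fv f xj h 1 + fv f xj h 2 in
  let B0 := fv f xj h (-2) - 2 * fv f xj h (-1) + fv f xj h 0 in
  let B1 := fv f xj h 0 - 2 * fv f xj h 1 + fv f xj h 2 in
  Rabs (A1 - A0) <= a -> Rabs (A1 + A0) <= a' -> Rabs (B1 - B0) <= b -> Rabs (B1 + B0) <= b' ->
  Rabs (beta1s Cb f xj h - beta0s Cb f xj h) <= / 4 * (a * a') + Cb * (b * b').
Proof.
intros HCb A0 A1 B0 B1 Ha Ha' Hb Hb'.
replace (beta1s Cb f xj h - beta0s Cb f xj h)
  with (/ 4 * ((A1 - A0) * (A1 + A0)) + Cb * ((B1 - B0) * (B1 + B0)))
  by (unfold beta0s, beta1s, A0, A1, B0, B1; ring).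
eapply Rle_trans; [apply Rabs_triang |].
rewrite !Rabs_mult, Rabs_pos_eq, (Rabs_pos_eq Cb) by lra.
apply Rplus_le_compat; apply Rmult_le_compat_l; try lra;
  apply Rmult_le_compat; auto using Rabs_pos.
Qed.

Lemma div_sub_div_le (t b0 b1 tau beta : R) :
  0 <= t <= tau -> 0 < beta -> beta <= b0 -> beta <= b1 ->
  Rabs (t / b0 - t / b1) <= tau / beta.
Proof.
intros Ht Hbeta H0 H1.
assert (Hdiv : forall b, beta <= b -> 0 <= t / b <= tau / beta).
{ intros b Hb; unfold Rdiv; split.
  - apply Rmult_le_pos; [lra |]; apply Rlt_le, Rinv_0_lt_compat; lra.
  - apply Rmult_le_compat; [lra | apply Rlt_le, Rinv_0_lt_compat; lra | lra |].
    apply Rinv_le_contravar; lra. }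
pose proof (Hdiv b0 H0); pose proof (Hdiv b1 H1).
unfold Rabs; destruct (Rcase_abs _); lra.
Qed.

Lemma div_sub_div_le_gap (t b0 b1 tau beta delta : R) :
  0 <= t <= tau -> 0 < beta -> beta <= b0 -> beta <= b1 -> Rabs (b1 - b0) <= delta ->
  Rabs (t / b0 - t / b1) <= tau * delta / beta ^ 2.
Proof.
intros Ht Hbeta H0 H1 Hgap.
replace (t / b0 - t / b1) with (t * (b1 - b0) * / (b0 * b1)) by (field; lra).
rewrite Rabs_mult, Rabs_mult, Rabs_inv, (Rabs_pos_eq t), (Rabs_pos_eq (b0 * b1)) by nra.
unfold Rdiv; apply Rmult_le_compat.
- apply Rmult_le_pos; [lra | apply Rabs_pos].
- apply Rlt_le, Rinv_0_lt_compat; nra.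
- apply Rmult_le_compat; [lra | apply Rabs_pos | lra | exact Hgap].
- apply Rinv_le_contravar; [nra |]; simpl; rewrite Rmult_1_r; apply Rmult_le_compat; lra.
Qed.

Lemma mul_le_of_lt_div (k c h : R) : 0 <= k -> 0 < h < c / (k + 1) -> k * h <= c.
Proof.
intros Hk [Hh Hlt].
apply (Rmult_lt_compat_r (k + 1)) in Hlt; [| lra].
unfold Rdiv in Hlt; rewrite Rmult_assoc, Rinv_l, Rmult_1_r in Hlt by lra.
nra.
Qed.

Ltac stencil_bound S xj wm2 wm1 w0 w1 w2 :=
  apply (S xj wm2 wm1 w0 w1 w2);
  [assumption | ring | unfold taylor_poly; cbn [sum_f_R0]; simpl INR
  | unfold Rabs; repeat destruct (Rcase_abs _); lra].

Section GridEstimates.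

Variables (f : R -> R) (a mu xj h : R).
Hypotheses (Hxj : xj = a + mu * h) (Hh : 0 < h).

Lemma tau4_le_regular (K0 K2 : R) :
  stencil_error_le f a mu h K0 0 -> stencil_error_le f a mu h K2 2 ->
  tau4 f xj h <= 8 * (K2 * 27) * (6 * (K0 * 3)) * h ^ 4.
Proof.
intros S0 S2.
assert (HD3 : Rabs ((fv f xj h 2 - 3 * fv f xj h 1 + 3 * fv f xj h 0 - fv f xj h (-1)) - 0)
              <= 8 * (K2 * (3 * h) ^ 3))
  by (stencil_bound S2 xj 0 (-1) 3 (-3) 1; field).
assert (HD2 : Rabs ((2 * fv f xj h 1 - 3 * fv f xj h 0 + fv f xj h (-1)) - 0)
              <= 6 * (K0 * (3 * h) ^ 1))
  by (stencil_bound S0 xj 0 1 (-3) 2 0; field).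
rewrite Rminus_0_r in HD3, HD2.
eapply Rle_trans; [exact (tau4_le f xj h _ _ HD3 HD2) | right; ring].
Qed.

(* 72 K1 h <= |f'(a)| makes the stencil error 8 K1 (3h)^2 at most half of 2 h f'(a). *)
Lemma betas_ge_of_slope (Cb K1 : R) :
  0 <= Cb -> stencil_error_le f a mu h K1 1 -> 72 * K1 * h <= Rabs (Derive_n f 1 a) ->
  (Derive_n f 1 a) ^ 2 / 4 * h ^ 2 <= beta0s Cb f xj h /\
  (Derive_n f 1 a) ^ 2 / 4 * h ^ 2 <= beta1s Cb f xj h.
Proof.
intros HCb S1 Hsmall.
set (c1 := Derive_n f 1 a) in *.
assert (HA0 : Rabs ((3 * fv f xj h 0 - 4 * fv f xj h (-1) + fv f xj h (-2)) - 2 * h * c1)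
              <= 8 * (K1 * (3 * h) ^ 2))
  by (stencil_bound S1 xj 1 (-4) 3 0 0; unfold c1; field).
assert (HA1 : Rabs ((3 * fv f xj h 0 - 4 * fv f xj h 1 + fv f xj h 2) - (-2) * h * c1)
              <= 8 * (K1 * (3 * h) ^ 2))
  by (stencil_bound S1 xj 0 0 3 (-4) 1; unfold c1; field).
assert (Hclose : forall p, Rabs p = Rabs (2 * h * c1) -> 8 * (K1 * (3 * h) ^ 2) <= Rabs p / 2).
{ intros p ->; rewrite !Rabs_mult, (Rabs_pos_eq 2), (Rabs_pos_eq h) by lra; nra. }
split.
- apply Rle_trans with ((2 * h * c1) ^ 2 / 16); [right; field |].
  exact (beta0s_ge_of_slope Cb f xj h _ HCb (Rle_trans _ _ _ HA0 (Hclose _ eq_refl))).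
- apply Rle_trans with ((-2 * h * c1) ^ 2 / 16); [right; field |].
  apply (beta1s_ge_of_slope Cb f xj h _ HCb), (Rle_trans _ _ _ HA1), Hclose.
  rewrite <- Rabs_Ropp; f_equal; ring.
Qed.

Hypothesis Hf1 : Derive_n f 1 a = 0.

Lemma tau4_le_critical (K1 K2 : R) :
  stencil_error_le f a mu h K1 1 -> stencil_error_le f a mu h K2 2 ->
  tau4 f xj h <= 8 * (K2 * 27) * (6 * (K1 * 9)) * h ^ 5.
Proof.
intros S1 S2.
assert (HD3 : Rabs ((fv f xj h 2 - 3 * fv f xj h 1 + 3 * fv f xj h 0 - fv f xj h (-1)) - 0)
              <= 8 * (K2 * (3 * h) ^ 3))
  by (stencil_bound S2 xj 0 (-1) 3 (-3) 1; field).
assert (HD2 : Rabs ((2 * fv f xj h 1 - 3 * fv f xj h 0 + fv f xj h (-1)) - 0)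
              <= 6 * (K1 * (3 * h) ^ 2))
  by (stencil_bound S1 xj 0 1 (-3) 2 0; rewrite Hf1; field).
rewrite Rminus_0_r in HD3, HD2.
eapply Rle_trans; [exact (tau4_le f xj h _ _ HD3 HD2) | right; ring].
Qed.

(* 216 K2 h <= |f''(a)| makes the stencil error 4 K2 (3h)^3 at most half of h^2 f''(a). *)
Lemma betas_ge_of_curvature (Cb K2 : R) :
  0 <= Cb -> stencil_error_le f a mu h K2 2 -> 216 * K2 * h <= Rabs (Derive_n f 2 a) ->
  Cb * ((Derive_n f 2 a) ^ 2 / 4) * h ^ 4 <= beta0s Cb f xj h /\
  Cb * ((Derive_n f 2 a) ^ 2 / 4) * h ^ 4 <= beta1s Cb f xj h.
Proof.
intros HCb S2 Hsmall.
set (c2 := Derive_n f 2 a) in *.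
assert (HB0 : Rabs ((fv f xj h (-2) - 2 * fv f xj h (-1) + fv f xj h 0) - c2 * h ^ 2)
              <= 4 * (K2 * (3 * h) ^ 3))
  by (stencil_bound S2 xj 1 (-2) 1 0 0; unfold c2; field).
assert (HB1 : Rabs ((fv f xj h 0 - 2 * fv f xj h 1 + fv f xj h 2) - c2 * h ^ 2)
              <= 4 * (K2 * (3 * h) ^ 3))
  by (stencil_bound S2 xj 0 0 1 (-2) 1; unfold c2; field).
assert (Hclose : 4 * (K2 * (3 * h) ^ 3) <= Rabs (c2 * h ^ 2) / 2).
{ rewrite Rabs_mult, (Rabs_pos_eq (h ^ 2)) by (apply pow_le; lra).
  assert (0 < h ^ 2) by (apply pow_lt; lra). nra. }
split; apply Rle_trans with (Cb * ((c2 * h ^ 2) ^ 2 / 4)); try (right; field).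
- exact (beta0s_ge_of_curvature Cb f xj h _ HCb (Rle_trans _ _ _ HB0 Hclose)).
- exact (beta1s_ge_of_curvature Cb f xj h _ HCb (Rle_trans _ _ _ HB1 Hclose)).
Qed.

Lemma beta_gap_le_critical (Cb K1 K2 K3 : R) :
  0 <= Cb -> 0 <= K1 -> 0 <= K3 -> h <= 1 ->
  stencil_error_le f a mu h K1 1 -> stencil_error_le f a mu h K2 2 ->
  stencil_error_le f a mu h K3 3 ->
  Rabs (beta1s Cb f xj h - beta0s Cb f xj h)
    <= (/ 4 * (10 * (K1 * 9) * (16 * (K3 * 81)))
        + Cb * (6 * (K2 * 27) * (8 * (K1 * 9)))) * h ^ 5.
Proof.
intros HCb HK1 HK3 Hh1 S1 S2 S3.
assert (HDA : Rabs ((3 * fv f xj h 0 - 4 * fv f xj h 1 + fv f xj h 2)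
                    - (3 * fv f xj h 0 - 4 * fv f xj h (-1) + fv f xj h (-2)) - 0)
              <= 10 * (K1 * (3 * h) ^ 2))
  by (stencil_bound S1 xj (-1) 4 0 (-4) 1; rewrite Hf1; field).
assert (HSA : Rabs ((3 * fv f xj h 0 - 4 * fv f xj h 1 + fv f xj h 2)
                    + (3 * fv f xj h 0 - 4 * fv f xj h (-1) + fv f xj h (-2)) - 0)
              <= 16 * (K3 * (3 * h) ^ 4))
  by (stencil_bound S3 xj 1 (-4) 6 (-4) 1; field).
assert (HDB : Rabs ((fv f xj h 0 - 2 * fv f xj h 1 + fv f xj h 2)
                    - (fv f xj h (-2) - 2 * fv f xj h (-1) + fv f xj h 0) - 0)
              <= 6 * (K2 * (3 * h) ^ 3))
  by (stencil_bound S2 xj (-1) 2 0 (-2) 1; field).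
assert (HSB : Rabs ((fv f xj h 0 - 2 * fv f xj h 1 + fv f xj h 2)
                    + (fv f xj h (-2) - 2 * fv f xj h (-1) + fv f xj h 0) - 0)
              <= 8 * (K1 * (3 * h) ^ 2))
  by (stencil_bound S1 xj 1 (-2) 2 (-2) 1; rewrite Hf1; field).
rewrite Rminus_0_r in HDA, HSA, HDB, HSB.
eapply Rle_trans; [exact (beta1s_sub_beta0s_le Cb f xj h _ _ _ _ HCb HDA HSA HDB HSB) |].
assert (0 <= h ^ 5) by (apply pow_le; lra).
assert (h ^ 6 <= h ^ 5) by (replace (h ^ 6) with (h * h ^ 5) by ring; nra).
assert (0 <= K1 * K3) by (apply Rmult_le_pos; lra).
nra.
Qed.

End GridEstimates.

Lemma ratio_gap_regular (Cb : R) (f : R -> R) (xs : R) :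
  0 <= Cb -> C6_near f xs -> Derive_n f 1 xs <> 0 ->
  exists M, at_right 0 (fun h =>
    Rabs (tau4 f xs h / beta0s Cb f xs h - tau4 f xs h / beta1s Cb f xs h) <= M * h ^ 2).
Proof.
intros HCb HC6 Hf1.
destruct (C6_near_taylor_remainder f xs 0 HC6) as [K0 [HK0 HT0]]; [lia |].
destruct (C6_near_taylor_remainder f xs 1 HC6) as [K1 [HK1 HT1]]; [lia |].
destruct (C6_near_taylor_remainder f xs 2 HC6) as [K2 [HK2 HT2]]; [lia |].
assert (Hmu : Rabs 0 <= 1) by (rewrite Rabs_R0; lra).
set (c1 := Derive_n f 1 xs) in *.
assert (Hc1 : 0 < c1 ^ 2) by (apply pow2_gt_0; exact Hf1).
set (T := 8 * (K2 * 27) * (6 * (K0 * 3))).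
exists (T / (c1 ^ 2 / 4)).
assert (Hsmall : 0 < Rabs c1 / (72 * K1 + 1))
  by (apply Rdiv_lt_0_compat; [apply Rabs_pos_lt; exact Hf1 | lra]).
generalize (filter_and _ _ (filter_and _ _ (stencil_taylor_error f xs K0 0 0 HK0 Hmu HT0)
  (stencil_taylor_error f xs K1 0 1 HK1 Hmu HT1))
  (filter_and _ _ (stencil_taylor_error f xs K2 0 2 HK2 Hmu HT2)
     (at_right_0_intro _ _ Hsmall (fun h Hh => Hh)))).
apply filter_imp; intros h [[S0 S1] [S2 Hh]].
assert (Hxj : xs = xs + 0 * h) by ring.
destruct (betas_ge_of_slope f xs 0 xs h Hxj (proj1 Hh) Cb K1 HCb S1
  (mul_le_of_lt_div (72 * K1) (Rabs c1) h ltac:(lra) Hh)) as [Hb0 Hb1].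
replace (T / (c1 ^ 2 / 4) * h ^ 2) with ((T * h ^ 4) / (c1 ^ 2 / 4 * h ^ 2))
  by (field; repeat split; (exact Hf1 || lra)).
apply div_sub_div_le; [| | exact Hb0 | exact Hb1].
- split; [unfold tau4; apply Rabs_pos |].
  exact (tau4_le_regular f xs 0 xs h Hxj K0 K2 S0 S2).
- apply Rmult_lt_0_compat; [lra | apply pow_lt; lra].
Qed.

Lemma ratio_gap_critical (Cb : R) (f : R -> R) (xc lam : R) :
  0 < Cb -> C6_near f xc -> Derive_n f 1 xc = 0 -> Derive_n f 2 xc <> 0 -> -1 < lam < 1 ->
  exists M, at_right 0 (fun h =>
    Rabs (tau4 f (xc - lam * h) h / beta0s Cb f (xc - lam * h) h
          - tau4 f (xc - lam * h) h / beta1s Cb f (xc - lam * h) h) <= M * h ^ 2).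
Proof.
intros HCb HC6 Hf1 Hf2 Hlam.
destruct (C6_near_taylor_remainder f xc 1 HC6) as [K1 [HK1 HT1]]; [lia |].
destruct (C6_near_taylor_remainder f xc 2 HC6) as [K2 [HK2 HT2]]; [lia |].
destruct (C6_near_taylor_remainder f xc 3 HC6) as [K3 [HK3 HT3]]; [lia |].
assert (Hmu : Rabs (- lam) <= 1) by (rewrite Rabs_Ropp; apply Rabs_le; lra).
set (c := Cb * (Derive_n f 2 xc ^ 2 / 4)).
assert (Hc : 0 < c)
  by (apply Rmult_lt_0_compat;
      [lra | apply Rdiv_lt_0_compat; [apply pow2_gt_0; exact Hf2 | lra]]).
set (T := 8 * (K2 * 27) * (6 * (K1 * 9))).
set (D := / 4 * (10 * (K1 * 9) * (16 * (K3 * 81))) + Cb * (6 * (K2 * 27) * (8 * (K1 * 9)))).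
exists (T * D / c ^ 2).
set (e := Rabs (Derive_n f 2 xc) / (216 * K2 + 1)).
assert (He : 0 < Rmin 1 e)
  by (apply Rmin_pos; [lra | apply Rdiv_lt_0_compat; [apply Rabs_pos_lt; exact Hf2 | lra]]).
generalize (filter_and _ _
  (filter_and _ _ (stencil_taylor_error f xc K1 (- lam) 1 HK1 Hmu HT1)
                  (stencil_taylor_error f xc K2 (- lam) 2 HK2 Hmu HT2))
  (filter_and _ _ (stencil_taylor_error f xc K3 (- lam) 3 HK3 Hmu HT3)
     (at_right_0_intro _ _ He (fun h Hh => Hh)))).
apply filter_imp; intros h [[S1 S2] [S3 [hpos hsmall]]].
assert (Hh1 : h <= 1) by (pose proof (Rmin_l 1 e); lra).
assert (Hh : 0 < h < e) by (pose proof (Rmin_r 1 e); lra).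
assert (Hxj : xc - lam * h = xc + - lam * h) by ring.
destruct (betas_ge_of_curvature f xc (- lam) _ h Hxj hpos Cb K2 (Rlt_le _ _ HCb) S2
  (mul_le_of_lt_div (216 * K2) (Rabs (Derive_n f 2 xc)) h ltac:(lra) Hh)) as [Hb0 Hb1].
replace (T * D / c ^ 2 * h ^ 2) with ((T * h ^ 5) * (D * h ^ 5) / (c * h ^ 4) ^ 2)
  by (field; lra).
apply div_sub_div_le_gap; [| | exact Hb0 | exact Hb1 |].
- split; [unfold tau4; apply Rabs_pos |].
  exact (tau4_le_critical f xc (- lam) _ h Hxj Hf1 K1 K2 S1 S2).
- apply Rmult_lt_0_compat; [lra | apply pow_lt; lra].
- exact (beta_gap_le_critical f xc (- lam) _ h Hxj hpos Hf1 Cb K1 K2 K3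
    (Rlt_le _ _ HCb) HK1 HK3 Hh1 S1 S2 S3).
Qed.

(** * Nonlinear weights *)

Lemma weights_dev_le (d0 d1 Ca t0 t1 : R) :
  0 <= d0 -> 0 <= d1 -> d0 + d1 = 1 -> 0 <= Ca -> 0 <= t0 -> 0 <= t1 ->
  Rabs (d0 * (1 + Ca * t0) / (d0 * (1 + Ca * t0) + d1 * (1 + Ca * t1)) - d0)
    <= d0 * d1 * Ca * Rabs (t0 - t1) /\
  Rabs (d1 * (1 + Ca * t1) / (d0 * (1 + Ca * t0) + d1 * (1 + Ca * t1)) - d1)
    <= d0 * d1 * Ca * Rabs (t0 - t1).
Proof.
intros Hd0 Hd1 Hsum HCa Ht0 Ht1.
set (S := d0 * (1 + Ca * t0) + d1 * (1 + Ca * t1)).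
assert (HS : 1 <= S).
{ unfold S; pose proof (Rmult_le_pos _ _ HCa Ht0); pose proof (Rmult_le_pos _ _ HCa Ht1); nra. }
set (g := d0 * d1 * Ca * (t0 - t1)).
assert (Hg : Rabs (g / S) <= d0 * d1 * Ca * Rabs (t0 - t1)).
{ unfold Rdiv, g; rewrite !Rabs_mult, Rabs_inv, (Rabs_pos_eq S), (Rabs_pos_eq d0),
    (Rabs_pos_eq d1), (Rabs_pos_eq Ca) by lra.
  assert (Hinv : 0 < / S <= 1)
    by (split; [apply Rinv_0_lt_compat; lra | rewrite <- Rinv_1; apply Rinv_le_contravar; lra]).
  pose proof (Rmult_le_pos _ _ (Rmult_le_pos _ _ (Rmult_le_pos _ _ Hd0 Hd1) HCa)
                           (Rabs_pos (t0 - t1))).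
  nra. }
assert (N0 : d0 * (1 + Ca * t0) - d0 * S = g)
  by (unfold g, S; replace d0 with (1 - d1) by lra; ring).
assert (N1 : d1 * (1 + Ca * t1) - d1 * S = - g)
  by (unfold g, S; replace d0 with (1 - d1) by lra; ring).
clearbody S g; split.
- replace (d0 * (1 + Ca * t0) / S - d0) with (g / S) by (rewrite <- N0; field; lra).
  exact Hg.
- replace (d1 * (1 + Ca * t1) / S - d1) with (- (g / S))
    by (rewrite <- (Ropp_involutive g), <- N1; field; lra).
  rewrite Rabs_Ropp; exact Hg.
Qed.

(* Also covers [y = 0], where the division returns [0]. *)
Lemma div_nonneg (x y : R) : 0 <= x -> 0 <= y -> 0 <= x / y.
Proof.
intros Hx Hy; destruct (Req_dec y 0) as [-> | Hy0].
- unfold Rdiv; rewrite Rinv_0; lra.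
- apply Rdiv_le_0_compat; lra.
Qed.

Lemma beta0s_nonneg (Cb : R) (f : R -> R) (xj h : R) : 0 <= Cb -> 0 <= beta0s Cb f xj h.
Proof.
intros HCb; unfold beta0s; cbv zeta.
pose proof (pow2_ge_0 (3 * fv f xj h 0 - 4 * fv f xj h (-1) + fv f xj h (-2))).
pose proof (pow2_ge_0 (fv f xj h (-2) - 2 * fv f xj h (-1) + fv f xj h 0)).
nra.
Qed.

Lemma beta1s_nonneg (Cb : R) (f : R -> R) (xj h : R) : 0 <= Cb -> 0 <= beta1s Cb f xj h.
Proof.
intros HCb; unfold beta1s; cbv zeta.
pose proof (pow2_ge_0 (3 * fv f xj h 0 - 4 * fv f xj h 1 + fv f xj h 2)).
pose proof (pow2_ge_0 (fv f xj h 0 - 2 * fv f xj h 1 + fv f xj h 2)).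
nra.
Qed.

Lemma bigO_sq_right_of_at_right (g : R -> R) (C : R) :
  at_right 0 (fun h => Rabs (g h) <= C * h ^ 2) -> bigO_sq_right g.
Proof.
intros [eps Heps]; exists C, eps; split; [apply cond_pos |].
intros h Hh; apply Heps; [| lra].
change (Rabs (h - 0) < eps); rewrite Rminus_0_r, Rabs_pos_eq; lra.
Qed.

Lemma omega_bigO_of_ratio_gap (d0 d1 Ca Cb M : R) (f X : R -> R) :
  0 <= d0 -> 0 <= d1 -> d0 + d1 = 1 -> 0 <= Ca -> 0 <= Cb ->
  at_right 0 (fun h => Rabs (tau4 f (X h) h / beta0s Cb f (X h) h
                             - tau4 f (X h) h / beta1s Cb f (X h) h) <= M * h ^ 2) ->
  bigO_sq_right (fun dx => omega0 d0 d1 Ca Cb f (X dx) dx - d0) /\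
  bigO_sq_right (fun dx => omega1 d0 d1 Ca Cb f (X dx) dx - d1).
Proof.
intros Hd0 Hd1 Hsum HCa HCb Hgap.
assert (Hk : 0 <= d0 * d1 * Ca) by (apply Rmult_le_pos; [apply Rmult_le_pos |]; lra).
assert (Hdev : forall h,
  Rabs (tau4 f (X h) h / beta0s Cb f (X h) h - tau4 f (X h) h / beta1s Cb f (X h) h)
    <= M * h ^ 2 ->
  Rabs (omega0 d0 d1 Ca Cb f (X h) h - d0) <= d0 * d1 * Ca * M * h ^ 2 /\
  Rabs (omega1 d0 d1 Ca Cb f (X h) h - d1) <= d0 * d1 * Ca * M * h ^ 2).
{ intros h Hh.
  assert (Htau : 0 <= tau4 f (X h) h) by (unfold tau4; apply Rabs_pos).
  destruct (weights_dev_le d0 d1 Ca _ _ Hd0 Hd1 Hsum HCa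
    (div_nonneg _ _ Htau (beta0s_nonneg Cb f (X h) h HCb))
    (div_nonneg _ _ Htau (beta1s_nonneg Cb f (X h) h HCb))) as [H0 H1].
  assert (Hscale : d0 * d1 * Ca * Rabs (tau4 f (X h) h / beta0s Cb f (X h) h
                                         - tau4 f (X h) h / beta1s Cb f (X h) h)
                   <= d0 * d1 * Ca * M * h ^ 2)
    by (rewrite Rmult_assoc with (r3 := h ^ 2); apply Rmult_le_compat_l; assumption).
  unfold omega0, omega1, alpha0, alpha1; split; lra. }
split; apply (bigO_sq_right_of_at_right _ (d0 * d1 * Ca * M));
  (eapply filter_imp; [intros h Hh; apply (Hdev h Hh) | exact Hgap]).
Qed.

Theorem mainTheorem5 (d0 d1 Ca Cb : R) :
  0 < d0 -> 0 < d1 -> d0 + d1 = 1 -> 0 < Ca -> 0 < Cb ->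
  (forall (f : R -> R) (xs : R),
      C6_near f xs -> Derive_n f 1 xs <> 0 ->
      bigO_sq_right (fun dx => omega0 d0 d1 Ca Cb f xs dx - d0) /\
      bigO_sq_right (fun dx => omega1 d0 d1 Ca Cb f xs dx - d1)) /\
  (forall (f : R -> R) (xc lam : R),
      C6_near f xc ->
      Derive_n f 1 xc = 0 -> Derive_n f 2 xc <> 0 -> Derive_n f 3 xc <> 0 ->
      -1 < lam < 1 ->
      bigO_sq_right (fun dx => omega0 d0 d1 Ca Cb f (xc - lam * dx) dx - d0) /\
      bigO_sq_right (fun dx => omega1 d0 d1 Ca Cb f (xc - lam * dx) dx - d1)).
Proof.
intros Hd0 Hd1 Hsum HCa HCb; split.
- intros f xs HC6 Hf1.
  destruct (ratio_gap_regular Cb f xs (Rlt_le _ _ HCb) HC6 Hf1) as [M HM].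
  apply (omega_bigO_of_ratio_gap d0 d1 Ca Cb M f (fun _ => xs)); lra || exact HM.
- (* The estimate does not need f'''(x_c) <> 0. *)
  intros f xc lam HC6 Hf1 Hf2 _ Hlam.
  destruct (ratio_gap_critical Cb f xc lam HCb HC6 Hf1 Hf2 Hlam) as [M HM].
  apply (omega_bigO_of_ratio_gap d0 d1 Ca Cb M f (fun h => xc - lam * h)); lra || exact HM.
Qed.
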